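(* Let $\psi:L\to\mathcal{H}_3(\mathbb{Z})$, $L\subseteq S^*$, be a Cayley automatic representation of the Heisenberg group, and let $L_H,L_{H_1},w_0,R_\varphi,R_{p_1},R_{p_2}$ be as in the context. Assume there exist FA-recognizable relations $R_0,R_1,R_2\subseteq S^*\times S^*$ such that $L_H\triangleleft R_0=R_\varphi$, $R_1\triangleright L_{H_1}=R_{p_1}$, $L_H\triangleleft R_2=R_{p_2}$, and $R_2\triangleright\{w_0\}=R_{p_2}\triangleright\{w_0\}$. Then the function $h(n)=\max\{d_A(\pi(w),\psi(w)) : w\in L,|w|\le n\}$ satisfies $\mathfrak{e}\preceq h$. In particular, $h\not\preceq f$ for every $f\in\mathfrak{F}$ with $f\prec\mathfrak{e}$.
   Context: $\mathcal{H}_3(\mathbb{Z})$ is the group of integer matrices $\begin{pmatrix}1&x&z\\0&1&y\\0&0&1\end{pmatrix}$, identified with triples $(x,y,z)\in\mathbb{Z}^3$. Let $s,p,q$ be the elements $(1,0,0),(0,1,0),(0,0,1)$; for $g=(x,y,z)$, $gs=(x+1,y,z)$, $gp=(x,y+1,x+z)$, $gq=(x,y,z+1)$. Let $A=\{e,s,p,q\}$, $S=A\cup A^{-1}$, $\pi:S^*\to\mathcal{H}_3(\mathbb{Z})$ the evaluation map, $d_A$ the word metric. $H=\{(x,0,z)\}\cong\mathbb{Z}^2$ is the subgroup generated by $s,q$, written as column vectors $[x;z]$. Endomorphisms of $H$: $\varphi([x;z])=[x;x+z]$ (matrix $\begin{pmatrix}1&0\\1&1\end{pmatrix}$), $p_1([x;z])=[x;0]$,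 $p_2([x;z])=[0;z]$. $H_1=p_1(H)=\langle s\rangle$, $H_2=p_2(H)=\langle q\rangle$. A Cayley automatic representation is a bijection $\psi:L\to G$ from a regular $L\subseteq S^*$ such that for each $a\in A$ the relation $\{(\psi^{-1}(g),\psi^{-1}(ga))\}$ is FA-recognizable, where a relation is FA-recognizable if the language of convolutions (parallel readings of the strings with shorter ones padded by a new symbol $\diamond$) is regular. Set $L_H=\psi^{-1}(H)$, $L_{H_1}=\psi^{-1}(H_1)$, $L_{H_2}=\psi^{-1}(H_2)$, $w_0=\psi^{-1}(e)$, and for $\theta\in\{\varphi,p_1,p_2\}$, $R_\theta=\{(w,\psi^{-1}(\theta(\psi(w)))) : w\in L_H\}$. For $R\subseteq S^*\times S^*$ and $X\subseteq S^*$: $X\triangleleft R=\{(u,v)\in R: u\in X\}$ and $R\triangleright X=\{(u,v)\in R: v\in X\}$. $\mathfrak{e}(n)=\exp(n)$. $\mathfrak{F}$ is the set of nondecreasing functions from some interval $[Q,\infty)\cap\mathbb{N}$ to the nonnegative reals; $g\preceq f$ means there exist $N\ge0$ and positive integers $K,M$ with $g(n)\le Kf(Mn)$ for all $n\ge N$; $g\prec f$ means $g\preceq f$ but not $f\preceq g$. *)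

From HB Require Import structures.
From mathcomp Require Import all_boot.
From Stdlib Require Import ZArith Reals Lia.

Set Implicit Arguments.
Unset Strict Implicit.
Unset Printing Implicit Defensive.

Inductive letter := Le | Ls | Lp | Lq | Lsi | Lpi | Lqi.

Definition letter_to (a : letter) : 'I_7 :=
  inord (match a with Le => 0 | Ls => 1 | Lp => 2 | Lq => 3
                    | Lsi => 4 | Lpi => 5 | Lqi => 6 end).
Definition letter_of (i : 'I_7) : letter :=
  match val i with 0 => Le | 1 => Ls | 2 => Lp | 3 => Lq
                 | 4 => Lsi | 5 => Lpi | _ => Lqi end.
Lemma letter_toK : cancel letter_to letter_of.
Proof. by case; rewrite /letter_of /letter_to /= inordK. Qed.

HB.instance Definition _ := Equality.copy letter (can_type letter_toK).
HB.instance Definition _ := Choice.copy letter (can_type letter_toK).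
HB.instance Definition _ := Countable.copy letter (can_type letter_toK).
HB.instance Definition _ := Finite.copy letter (can_type letter_toK).

Definition isA (a : letter) : bool :=
  match a with Le | Ls | Lp | Lq => true | _ => false end.

Record dfa (T : Type) := DFA {
  dfa_state : finType;
  dfa_s0 : dfa_state;
  dfa_fin : pred dfa_state;
  dfa_step : dfa_state -> T -> dfa_state }.

Definition dfa_accept (T : Type) (D : dfa T) (w : seq T) : bool :=
  @dfa_fin T D (foldl (@dfa_step T D) (@dfa_s0 T D) w).

Definition regular (T : Type) (L : seq T -> Prop) : Prop :=
  exists D : dfa T, forall w, L w <-> dfa_accept D w.

(* convolution; None plays the role of the padding symbol ⋄ *)
Definition conv (u v : seq letter) : seq (option letter * option letter) :=
  mkseq (fun i => (nth None (map Some u) i, nth None (map Some v) i))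
        (maxn (size u) (size v)).

Definition FA_rec (R : seq letter -> seq letter -> Prop) : Prop :=
  regular (fun w => exists u v, R u v /\ w = conv u v).

Record H3 := mkH { hx : Z; hy : Z; hz : Z }.

Definition hone : H3 := mkH 0 0 0.
Definition hmul (g h : H3) : H3 :=
  mkH (hx g + hx h)%Z (hy g + hy h)%Z (hz g + hz h + hx g * hy h)%Z.
Definition hinv (g : H3) : H3 :=
  mkH (- hx g)%Z (- hy g)%Z (- hz g + hx g * hy g)%Z.

Definition letter_val (a : letter) : H3 :=
  match a with
  | Le => hone
  | Ls => mkH 1 0 0 | Lp => mkH 0 1 0 | Lq => mkH 0 0 1
  | Lsi => hinv (mkH 1 0 0) | Lpi => hinv (mkH 0 1 0) | Lqi => hinv (mkH 0 0 1)
  end.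

Definition pi (w : seq letter) : H3 := foldl (fun g a => hmul g (letter_val a)) hone w.

Definition heqb (g h : H3) : bool :=
  [&& Z.eqb (hx g) (hx h), Z.eqb (hy g) (hy h) & Z.eqb (hz g) (hz h)].

Definition reach_len (g : H3) (n : nat) : bool :=
  [exists t : n.-tuple letter, heqb (pi t) g].

Lemma hmul_assoc (a b c : H3) : hmul a (hmul b c) = hmul (hmul a b) c.
Proof. destruct a, b, c; unfold hmul; simpl; f_equal; lia. Qed.

Lemma hmul1 (g : H3) : hmul g hone = g.
Proof. destruct g; unfold hmul; simpl; f_equal; lia. Qed.

Lemma foldl_pi (g : H3) (v : seq letter) :
  foldl (fun g a => hmul g (letter_val a)) g v = hmul g (pi v).
Proof.
  rewrite /pi; elim: v g => [|a v IH] g /=; first by rewrite hmul1.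
  rewrite IH [in RHS]IH -hmul_assoc; congr hmul.
  by case: a; destruct g; rewrite /hmul /=; f_equal; lia.
Qed.

Lemma pi_cat (u v : seq letter) : pi (u ++ v) = hmul (pi u) (pi v).
Proof. by rewrite {1}/pi foldl_cat foldl_pi. Qed.

Definition zpow (a ai : letter) (k : Z) : seq letter :=
  if (0 <=? k)%Z then nseq (Z.to_nat k) a else nseq (Z.to_nat (- k)) ai.

Lemma pi_zpow_s k : pi (zpow Ls Lsi k) = mkH k 0 0.
Proof.
  rewrite /zpow; case: (Z.leb_spec 0 k) => Hk.
  - rewrite -{2}(Z2Nat.id k Hk); elim: (Z.to_nat k) => [|n IH] //.
    change (nseq n.+1 ?a) with ([:: a] ++ nseq n a); rewrite pi_cat IH Nat2Z.inj_succ /pi /hmul /hinv; cbn -[Z.add Z.mul Z.opp Z.of_nat]; f_equal; lia.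
  - have Hk' : (k = - Z.of_nat (Z.to_nat (- k)))%Z by lia.
    rewrite {2}Hk'; elim: (Z.to_nat (- k)) => [|n IH] //.
    change (nseq n.+1 ?a) with ([:: a] ++ nseq n a); rewrite pi_cat IH Nat2Z.inj_succ /pi /hmul /hinv; cbn -[Z.add Z.mul Z.opp Z.of_nat]; f_equal; lia.
Qed.

Lemma pi_zpow_p k : pi (zpow Lp Lpi k) = mkH 0 k 0.
Proof.
  rewrite /zpow; case: (Z.leb_spec 0 k) => Hk.
  - rewrite -{2}(Z2Nat.id k Hk); elim: (Z.to_nat k) => [|n IH] //.
    change (nseq n.+1 ?a) with ([:: a] ++ nseq n a); rewrite pi_cat IH Nat2Z.inj_succ /pi /hmul /hinv; cbn -[Z.add Z.mul Z.opp Z.of_nat]; f_equal; lia.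
  - have Hk' : (k = - Z.of_nat (Z.to_nat (- k)))%Z by lia.
    rewrite {2}Hk'; elim: (Z.to_nat (- k)) => [|n IH] //.
    change (nseq n.+1 ?a) with ([:: a] ++ nseq n a); rewrite pi_cat IH Nat2Z.inj_succ /pi /hmul /hinv; cbn -[Z.add Z.mul Z.opp Z.of_nat]; f_equal; lia.
Qed.

Lemma pi_zpow_q k : pi (zpow Lq Lqi k) = mkH 0 0 k.
Proof.
  rewrite /zpow; case: (Z.leb_spec 0 k) => Hk.
  - rewrite -{2}(Z2Nat.id k Hk); elim: (Z.to_nat k) => [|n IH] //.
    change (nseq n.+1 ?a) with ([:: a] ++ nseq n a); rewrite pi_cat IH Nat2Z.inj_succ /pi /hmul /hinv; cbn -[Z.add Z.mul Z.opp Z.of_nat]; f_equal; lia.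
  - have Hk' : (k = - Z.of_nat (Z.to_nat (- k)))%Z by lia.
    rewrite {2}Hk'; elim: (Z.to_nat (- k)) => [|n IH] //.
    change (nseq n.+1 ?a) with ([:: a] ++ nseq n a); rewrite pi_cat IH Nat2Z.inj_succ /pi /hmul /hinv; cbn -[Z.add Z.mul Z.opp Z.of_nat]; f_equal; lia.
Qed.

Lemma reach_exists (g : H3) : exists n, reach_len g n.
Proof.
  case: g => x y z.
  set w := zpow Ls Lsi x ++ zpow Lp Lpi y ++ zpow Lq Lqi (z - x * y)%Z.
  exists (size w); apply/existsP; exists (in_tuple w) => /=.
  rewrite /w !pi_cat pi_zpow_s pi_zpow_p pi_zpow_q /heqb /hmul /=.
  apply/and3P; split; apply/Z.eqb_eq; lia.
Qed.

Definition wlen (g : H3) : nat := ex_minn (reach_exists g).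
Definition dA (g h : H3) : nat := wlen (hmul (hinv g) h).

(* L is a (decidable) language, psi : S^* -> H_3(Z) is only relevant on L. *)
Definition cayley_automatic (L : pred (seq letter)) (psi : seq letter -> H3) : Prop :=
  regular (fun w => L w)
  /\ (forall u v, L u -> L v -> psi u = psi v -> u = v)
  /\ (forall g, exists w, L w /\ psi w = g)
  /\ (forall a, isA a ->
        FA_rec (fun u v => L u /\ L v /\ psi v = hmul (psi u) (letter_val a))).

Definition inH (g : H3) : bool := Z.eqb (hy g) 0.
Definition inH1 (g : H3) : bool := Z.eqb (hy g) 0 && Z.eqb (hz g) 0.

(* endomorphisms of H, written on triples (x,0,z) *)
Definition phiH (g : H3) : H3 := mkH (hx g) 0 (hx g + hz g)%Z.
Definition p1H (g : H3) : H3 := mkH (hx g) 0 0.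
Definition p2H (g : H3) : H3 := mkH 0 0 (hz g).

Section Rep.
Variables (L : pred (seq letter)) (psi : seq letter -> H3).
Definition L_H (w : seq letter) : Prop := L w /\ inH (psi w).
Definition L_H1 (w : seq letter) : Prop := L w /\ inH1 (psi w).
Definition is_w0 (w : seq letter) : Prop := L w /\ psi w = hone.
Definition R_theta (theta : H3 -> H3) (u v : seq letter) : Prop :=
  L_H u /\ L v /\ psi v = theta (psi u).
(* h(n) = max{ d_A(pi(w), psi(w)) : w in L, |w| <= n }  (0 if no such w) *)
Definition hfun (n : nat) : nat :=
  \max_(k < n.+1) \max_(t : k.-tuple letter | L (tval t)) dA (pi t) (psi t).
End Rep.

Definition restrL (X : seq letter -> Prop) (R : seq letter -> seq letter -> Prop) u v :=
  X u /\ R u v.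
Definition restrR (R : seq letter -> seq letter -> Prop) (X : seq letter -> Prop) u v :=
  R u v /\ X v.

Definition preceq (g f : nat -> R) : Prop :=
  exists (N K M : nat), 0 < K /\ 0 < M /\
    forall n, N <= n -> Rle (g n) (Rmult (INR K) (f (M * n))).
Definition prec (g f : nat -> R) : Prop := preceq g f /\ ~ preceq f g.

(* the class 𝔉 (functions given on [Q,∞)∩N; values below Q are irrelevant) *)
Definition inFF (f : nat -> R) : Prop :=
  exists Q : nat, (forall n, Q <= n -> Rle 0 (f n))
                  /\ (forall m n, Q <= m -> m <= n -> Rle (f m) (f n)).

Definition expf (n : nat) : R := exp (INR n).

(* Pumping the automata for [phi] and [p2] restricted to [H] shows that applying either
   map lengthens a representative by at most a constant. The hypothesis on [R2] near [w0]
   lets us go back from [q^x] to [s^x]: pumping simultaneously the runs on the pairs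
   (psi^-1(s^x), psi^-1(s^x q^x)), (psi^-1(s^x q^x), psi^-1(q^x)) and (psi^-1(s^x), w0)
   shows that the representative of [s^x] is at most a constant longer than that of [q^x].
   Composing, [s^(2x)] is reached from [s^x] through [s^x q^x], [s^x q^(2x)], [q^(2x)] with
   bounded growth, so [s^(2^k)] has a representative [w] of length O(k). As the first
   coordinate of [pi w] is at most [|w|] in absolute value, [d_A(pi w, psi w) >= 2^k - O(k)],
   which is exponential in [|w|]. *)

From Pilot Require Import Defs.
From Stdlib Require Import ZArith Reals Lia Lra.
From mathcomp Require Import all_boot zify.

Set Implicit Arguments.
Unset Strict Implicit.

Definition cut (T : Type) (i j : nat) (s : seq T) : seq T := take i s ++ drop j s.

Section Cut.
Variables (T : Type) (i j : nat).
Hypothesis le_ij : i <= j.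

Lemma nth_cut (x0 : T) (s : seq T) k :
  nth x0 (cut i j s) k = if k < i then nth x0 s k else nth x0 s (k - i + j).
Proof.
rewrite /cut nth_cat size_take_min.
case: (leqP i (size s)) => hs.
- case: ifP => hk; first by rewrite nth_take.
  by rewrite nth_drop; congr nth; lia.
- rewrite (drop_oversize (s := s) (n := j)); last by lia.
  case: (ltnP k (size s)) => hk.
  + have -> : k < i by lia.
    by rewrite nth_take //; lia.
  + by rewrite nth_nil; case: ifP => _; rewrite nth_default //; lia.
Qed.

Lemma size_cut (s : seq T) : size (cut i j s) = minn i (size s) + (size s - j).
Proof. by rewrite /cut size_cat size_take_min size_drop. Qed.

Lemma cut_oversize (s : seq T) : size s <= i -> cut i j s = s.
Proof. by move=> hs; rewrite /cut take_oversize // drop_oversize ?cats0 //; lia. Qed.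

Lemma size_cut_lt (s : seq T) : i < j -> i < size s -> size (cut i j s) < size s.
Proof. by rewrite size_cut; lia. Qed.

End Cut.

Lemma size_conv u v : size (conv u v) = maxn (size u) (size v).
Proof. by rewrite size_mkseq. Qed.

Lemma nth_conv u v k : nth (None, None) (conv u v) k = (onth u k, onth v k).
Proof.
rewrite !onthE /conv; case: (ltnP k (maxn (size u) (size v))) => hk.
  by rewrite nth_mkseq.
by rewrite nth_default ?size_mkseq // !nth_default // size_map; lia.
Qed.

Lemma conv_inj u v u' v' : conv u v = conv u' v' -> u = u' /\ v = v'.
Proof.
move=> E; have onth_eq k : (onth u k, onth v k) = (onth u' k, onth v' k).
  by rewrite -!nth_conv E.
by split; apply: eq_from_onth => k; case: (onth_eq k).
Qed.

Lemma conv_cut i j u v : i <= j -> conv (cut i j u) (cut i j v) = cut i j (conv u v).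
Proof.
move=> le_ij; apply: (eq_from_nth (x0 := (None, None))).
  by rewrite size_conv !size_cut size_conv; lia.
move=> k _; rewrite nth_conv !onthE /cut !map_cat !map_take !map_drop.
by rewrite -!/(cut _ _ _) !nth_cut //; case: ifP => _; rewrite nth_conv !onthE.
Qed.

Definition conv_accept (D : dfa (option letter * option letter)) u v : bool :=
  dfa_accept D (conv u v).

Definition conv_run (D : dfa (option letter * option letter)) u v k :=
  foldl (@dfa_step _ D) (@dfa_s0 _ D) (take k (conv u v)).

Lemma conv_accept_cut D u v i j : i <= j -> conv_run D u v i = conv_run D u v j ->
  conv_accept D u v -> conv_accept D (cut i j u) (cut i j v).
Proof.
move=> le_ij run_ij; rewrite /conv_accept /dfa_accept conv_cut // /cut foldl_cat.
by rewrite -/(conv_run D u v i) run_ij /conv_run -foldl_cat cat_take_drop.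
Qed.

Lemma FA_recP R : FA_rec R -> exists D, forall u v, R u v <-> conv_accept D u v.
Proof.
move=> [D HD]; exists D => u v; split=> [Ruv|].
  by apply/HD; exists u, v.
by move=> /HD [u' [v' [Ruv /conv_inj [-> ->]]]].
Qed.

Lemma pigeonhole_window (T : finType) (f : nat -> T) P :
  exists i j, [/\ P <= i, i < j, j <= P + #|T| & f i = f j].
Proof.
pose g (k : 'I_#|T|.+1) := f (P + k).
have /injectivePn [x [y neq_xy gxy]] : ~~ injectiveb g.
  by apply/injectiveP => /leq_card; rewrite card_ord ltnn.
have hx := ltn_ord x; have hy := ltn_ord y.
case: (ltngtP x y) => [lt_xy|lt_yx|eq_xy].
- by exists (P + x), (P + y); split=> //; lia.
- by exists (P + y), (P + x); split=> //; lia.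
- by move: neq_xy; rewrite (val_inj eq_xy) eqxx.
Qed.

Section Representation.
Variables (L : pred (seq letter)) (psi : seq letter -> H3).
Hypothesis psi_inj : forall u v, L u -> L v -> psi u = psi v -> u = v.

Lemma R_theta_size_bound theta R : FA_rec R ->
  (forall u v, restrL (L_H L psi) R u v <-> R_theta L psi theta u v) ->
  exists N, forall a t, R_theta L psi theta a t -> size t < size a + N.
Proof.
move=> /FA_recP [D HD] R_theta_R; exists #|dfa_state D| => a t Rat.
rewrite ltnNge; apply/negP => long_t.
have [LHa [Lt pt]] := Rat.
have acc_at : conv_accept D a t by apply/HD; case: ((R_theta_R a t).2 Rat).
have [i [j [le_ai lt_ij le_j run_ij]]] := pigeonhole_window (conv_run D a t) (size a).
have le_ij := ltnW lt_ij.
have acc_cut := conv_accept_cut le_ij run_ij acc_at.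
rewrite cut_oversize // in acc_cut.
have [_ [Lt' pt']] := (R_theta_R a (cut i j t)).1 (conj LHa ((HD _ _).2 acc_cut)).
have cut_t : cut i j t = t by apply: psi_inj; rewrite // pt pt'.
have lt_it : i < size t := leq_trans lt_ij (leq_trans le_j long_t).
by have := size_cut_lt le_ij lt_ij lt_it; rewrite cut_t ltnn.
Qed.

Variables R0 R2 : seq letter -> seq letter -> Prop.
Hypotheses (R0_rec : FA_rec R0) (R2_rec : FA_rec R2).
Hypothesis R0_phi : forall u v, restrL (L_H L psi) R0 u v <-> R_theta L psi phiH u v.
Hypothesis R2_p2 : forall u v, restrL (L_H L psi) R2 u v <-> R_theta L psi p2H u v.
Hypothesis R2_w0 : forall u v,
  restrR R2 (is_w0 L psi) u v <-> restrR (R_theta L psi p2H) (is_w0 L psi) u v.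
Variable w0 : seq letter.
Hypothesis w0_id : is_w0 L psi w0.

Lemma s_power_size_bound : exists N, forall x a t b, L a -> L t -> L b ->
  psi a = mkH x 0 0 -> psi t = mkH x 0 x -> psi b = mkH 0 0 x ->
  size a < maxn (size b) (size w0) + N.
Proof.
move/FA_recP: R0_rec => [D0 HD0]; move/FA_recP: R2_rec => [D2 HD2].
exists #|{: (dfa_state D0 * dfa_state D2 * dfa_state D2)%type}|.
move=> x a t b La Lt Lb pa pt pb; rewrite ltnNge; apply/negP => long_a.
have [Lw0 pw0] := w0_id.
have LHa : L_H L psi a by split; rewrite // pa.
have LHt : L_H L psi t by split; rewrite // pt.
have R_at : R_theta L psi phiH a t by split=> //; split; rewrite // pt pa /phiH /= Z.add_0_r.
have R_tb : R_theta L psi p2H t b by split=> //; split; rewrite // pb pt.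
have R_aw0 : R_theta L psi p2H a w0 by split=> //; split; rewrite // pw0 pa.
have acc_at : conv_accept D0 a t by apply/HD0; case: ((R0_phi a t).2 R_at).
have acc_tb : conv_accept D2 t b by apply/HD2; case: ((R2_p2 t b).2 R_tb).
have acc_aw0 : conv_accept D2 a w0.
  by apply/HD2; case: ((R2_w0 a w0).2 (conj R_aw0 w0_id)).
pose run k := (conv_run D0 a t k, conv_run D2 t b k, conv_run D2 a w0 k).
have [i [j [le_i lt_ij le_j [= run_at run_tb run_aw0]]]] :=
  pigeonhole_window run (maxn (size b) (size w0)).
have le_ij := ltnW lt_ij.
set a' := cut i j a; set t' := cut i j t.
have acc_a't' : conv_accept D0 a' t' := conv_accept_cut le_ij run_at acc_at.
have acc_t'b : conv_accept D2 t' b.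
  rewrite -(cut_oversize le_ij (_ : size b <= i)); last by lia.
  exact: conv_accept_cut.
have acc_a'w0 : conv_accept D2 a' w0.
  rewrite -(cut_oversize le_ij (_ : size w0 <= i)); last by lia.
  exact: conv_accept_cut.
(* The run on [(a', w0)] puts [psi a'] in [<s>]; then [phi] and [p2] send it to [psi b]. *)
have [[[La' LHa'] [_ pw0']] _] := (R2_w0 a' w0).1 (conj ((HD2 _ _).2 acc_a'w0) w0_id).
have [_ [Lt' pt']] := (R0_phi a' t').1 (conj (conj La' LHa') ((HD0 _ _).2 acc_a't')).
have LHt' : L_H L psi t' by split; rewrite // pt'.
have [_ [_ pb']] := (R2_p2 t' b).1 (conj LHt' ((HD2 _ _).2 acc_t'b)).
have pa' : psi a' = psi a.
  move: LHa' pw0' pb'; rewrite pw0 pt' pb pa /inH /p2H /phiH.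
  by case: (psi a') => x' y' z' /= /Z.eqb_eq -> [<-] [->]; rewrite Z.add_0_r.
have cut_a : a' = a by apply: psi_inj.
have lt_ia : i < size a := leq_trans lt_ij (leq_trans le_j long_a).
by have := size_cut_lt le_ij lt_ij lt_ia; rewrite -/a' cut_a ltnn.
Qed.

Hypothesis psi_surj : forall g, exists w, L w /\ psi w = g.

Lemma s_power_doubling : exists D, forall x a, L a -> psi a = mkH x 0 0 ->
  exists2 a', L a' /\ psi a' = mkH (2 * x) 0 0 & size a' <= maxn (size a) (size w0) + D.
Proof.
have [N1 phi_bound] := R_theta_size_bound R0_rec R0_phi.
have [N2 p2_bound] := R_theta_size_bound R2_rec R2_p2.
have [N3 s_bound] := s_power_size_bound.
exists (N1 + N1 + N2 + N3) => x a La pa.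
have [t1 [Lt1 pt1]] := psi_surj (mkH x 0 x).
have [t2 [Lt2 pt2]] := psi_surj (mkH x 0 (2 * x)).
have [b [Lb pb]] := psi_surj (mkH 0 0 (2 * x)).
have [a' [La' pa']] := psi_surj (mkH (2 * x) 0 0).
have [t' [Lt' pt']] := psi_surj (mkH (2 * x) 0 (2 * x)).
have size_t1 : size t1 < size a + N1.
  apply: phi_bound; split; first by split; rewrite // pa.
  by split; rewrite // pt1 pa /phiH /= Z.add_0_r.
have size_t2 : size t2 < size t1 + N1.
  apply: phi_bound; split; first by split; rewrite // pt1.
  by split; rewrite // pt2 pt1 /phiH; cbn [hx hz]; congr mkH; lia.
have size_b : size b < size t2 + N2.
  apply: p2_bound; split; first by split; rewrite // pt2.
  by split; rewrite // pb pt2.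
have := s_bound _ _ _ _ La' Lt' Lb pa' pt' pb.
by exists a' => //; lia.
Qed.

Lemma short_s_powers : exists C D, forall k,
  exists2 a, L a /\ psi a = mkH (Z.of_nat (2 ^ k)) 0 0 & size a <= C + k * D.
Proof.
have [D doubling] := s_power_doubling.
have [a0 [La0 pa0]] := psi_surj (mkH 1 0 0).
exists (maxn (size a0) (size w0)), D; elim=> [|k [a [La pa] size_a]].
  by exists a0; rewrite ?pa0 //; lia.
have [a' [La' pa'] size_a'] := doubling _ _ La pa.
exists a'; last by lia.
by rewrite pa' expnS; split=> //; congr mkH; lia.
Qed.

End Representation.

Lemma abs_hx_pi_le_size u : (Z.abs (hx (Defs.pi u)) <= Z.of_nat (size u))%Z.
Proof.
elim: u => [|a u IH]; first by rewrite /Defs.pi /=; lia.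
have letter_bound : (Z.abs (hx (Defs.pi [:: a])) <= 1)%Z.
  by case: a; rewrite /Defs.pi /hmul /=; lia.
change (a :: u) with ([:: a] ++ u); rewrite pi_cat size_cat; cbn [hx hmul size].
move: letter_bound IH; lia.
Qed.

Lemma abs_hx_le_size_add_dA w g :
  (Z.abs (hx g) <= Z.of_nat (size w) + Z.of_nat (dA (Defs.pi w) g))%Z.
Proof.
rewrite /dA /wlen; case: ex_minnP => m /existsP [t /and3P [/Z.eqb_eq hx_t _ _]] _.
have := abs_hx_pi_le_size (u := w ++ t); rewrite pi_cat size_cat size_tuple /=.
by move: hx_t; rewrite /hmul /hinv /=; lia.
Qed.

Lemma dA_pi_le_hfun (L : pred (seq letter)) psi w n :
  L w -> size w <= n -> dA (Defs.pi w) (psi w) <= hfun L psi n.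
Proof.
move=> Lw size_w; rewrite /hfun.
apply: leq_trans (leq_bigmax (Ordinal (size_w : size w < n.+1))).
exact: (leq_bigmax_cond (P := fun t : (size w).-tuple letter => L t)
  (F := fun t : (size w).-tuple letter => dA (Defs.pi t) (psi t)) (in_tuple w) Lw).
Qed.

Lemma pow2_le_hfun_add (L : pred (seq letter)) psi a k n :
  L a -> psi a = mkH (Z.of_nat (2 ^ k)) 0 0 -> size a <= n -> 2 ^ k <= hfun L psi n + n.
Proof.
move=> La pa size_a; have := abs_hx_le_size_add_dA (w := a) (g := psi a).
by have := dA_pi_le_hfun psi La size_a; rewrite pa /=; lia.
Qed.

Lemma exp_le_pow3 n : Rle (exp (INR n)) (INR (3 ^ n)).
Proof.
elim: n => [|n IH]; first by rewrite /= exp_0; lra.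
rewrite S_INR exp_plus expnS -multE mult_INR Rmult_comm.
have e_le_3 : Rle (exp 1) (INR 3) by apply: Rle_trans exp_le_3 _; simpl; lra.
by apply: Rmult_le_compat => //; left; apply: exp_pos.
Qed.

Lemma pow3_add_sq_le_pow8 n : 3 ^ n + n * n <= 8 ^ n.
Proof.
case: n => [|n] //; set m := n.+1.
have sq_lt : m * m < 4 ^ m by rewrite (_ : 4 = 2 * 2) // expnMn ltn_mul // ltn_expl.
have pow3_le : 3 ^ m <= 4 ^ m by rewrite leq_exp2r.
have pow8 : 8 ^ m = 2 ^ m * 4 ^ m by rewrite -expnMn.
have pow2 : 2 <= 2 ^ m by rewrite -{1}(expn1 2) leq_exp2l.
by rewrite pow8; nia.
Qed.

Lemma preceq_trans g h f : preceq g h -> preceq h f -> preceq g f.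
Proof.
move=> [N1 [K1 [M1 [K1_gt0 [M1_gt0 gh]]]]] [N2 [K2 [M2 [K2_gt0 [M2_gt0 hf]]]]].
exists (maxn N1 N2), (K1 * K2), (M2 * M1); do 2 (split; first by rewrite muln_gt0; apply/andP).
move=> n le_n; apply: Rle_trans (gh n ltac:(lia)) _.
rewrite -mulnA -multE mult_INR Rmult_assoc.
by apply: Rmult_le_compat_l; [exact: pos_INR | apply: hf; nia].
Qed.

Lemma expf_preceq_hfun (L : pred (seq letter)) psi C D :
  (forall k, exists2 a, L a /\ psi a = mkH (Z.of_nat (2 ^ k)) 0 0 & size a <= C + k * D) ->
  preceq expf (fun n => INR (hfun L psi n)).
Proof.
move=> short; set M := C + 3 * D + 1.
exists M, 1, M; split=> //; split; first lia.
move=> n le_Mn.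
have [a [La pa] size_a] := short (3 * n).
have size_a' : size a <= M * n by nia.
have := pow2_le_hfun_add La pa size_a'.
have := pow3_add_sq_le_pow8 n; rewrite expnM (_ : 2 ^ 3 = 8) // => pow8 pow2.
have Mn_le_sq : M * n <= n * n := leq_mul le_Mn (leqnn n).
have pow3_le : 3 ^ n <= hfun L psi (M * n) by lia.
rewrite /expf Rmult_1_l; apply: Rle_trans (exp_le_pow3 n) _.
by apply/le_INR/leP.
Qed.

Theorem mainTheorem12 :
  forall (L : pred (seq letter)) (psi : seq letter -> H3),
  cayley_automatic L psi ->
  forall R0 R1 R2 : seq letter -> seq letter -> Prop,
  FA_rec R0 -> FA_rec R1 -> FA_rec R2 ->
  (forall u v, restrL (L_H L psi) R0 u v <-> R_theta L psi phiH u v) ->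
  (forall u v, restrR R1 (L_H1 L psi) u v <-> R_theta L psi p1H u v) ->
  (forall u v, restrL (L_H L psi) R2 u v <-> R_theta L psi p2H u v) ->
  (forall u v, restrR R2 (is_w0 L psi) u v <-> restrR (R_theta L psi p2H) (is_w0 L psi) u v) ->
  preceq expf (fun n => INR (hfun L psi n))
  /\ (forall f, inFF f -> prec f expf -> ~ preceq (fun n => INR (hfun L psi n)) f).
Proof.
move=> L psi [_ [psi_inj [psi_surj _]]] R0 R1 R2 R0_rec _ R2_rec R0_phi _ R2_p2 R2_w0.
have [w0 w0_id] := psi_surj hone.
have [C [D short]] := short_s_powers psi_inj R0_rec R2_rec R0_phi R2_p2 R2_w0 w0_id psi_surj.
have exp_h := expf_preceq_hfun short.
split=> // f _ [_ not_exp_f] h_f.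
exact: not_exp_f (preceq_trans exp_h h_f).
Qed.
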